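(* Let $\mathbb{D}$ be a division ring, let $m,n\ge 1$ be integers, and let $P$ be an $n\times m$ matrix over $\mathbb{D}$. If $V$ is an invertible $m\times m$ matrix over $\mathbb{D}$ and $W$ is an invertible $n\times n$ matrix over $\mathbb{D}$, then the rings $\mathfrak{M}(\mathbb{D}, m, n, P)$ and $\mathfrak{M}(\mathbb{D}, m, n, VPW)$ are isomorphic. Moreover, if $\mathbb{D}$ is a field, then $\mathfrak{M}(\mathbb{D}, m, n, P)$ and $\mathfrak{M}(\mathbb{D}, m, n, VPW)$ are isomorphic as $\mathbb{D}$-algebras.
   Context: For a division ring $\mathbb{D}$ and an $n\times m$ matrix $P$ over $\mathbb{D}$, $\mathfrak{M}(\mathbb{D}, m, n, P)$ denotes the set of all $m\times n$ matrices over $\mathbb{D}$ with entrywise addition and multiplication $A\bullet B = APB$ (usual matrix products on the right). When $\mathbb{D}$ is a field, scalar multiplication is entrywise, making it a $\mathbb{D}$-algebra. *)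

From mathcomp Require Import all_boot all_algebra.
Set Implicit Arguments. Unset Strict Implicit. Unset Printing Implicit Defensive.
Import GRing.Theory.
Local Open Scope ring_scope.

Definition is_division_ring (R : unitRingType) : Prop :=
  forall x : R, x != 0 -> x \is a GRing.unit.

Definition invertible_mx (R : pzRingType) (k : nat) (V : 'M[R]_k) : Prop :=
  exists V' : 'M[R]_k, V *m V' = 1%:M /\ V' *m V = 1%:M.

(* The sandwich product of M(D, m, n, P): A . B = A P B. *)
Definition sandwich_mul (R : pzRingType) (m n : nat) (P : 'M[R]_(n, m))
  (A B : 'M[R]_(m, n)) : 'M[R]_(m, n) := A *m P *m B.

Definition sandwich_ring_iso (R : pzRingType) (m n : nat) (P Q : 'M[R]_(n, m))
  (f : 'M[R]_(m, n) -> 'M[R]_(m, n)) : Prop :=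
  [/\ bijective f,
      (forall A B, f (A + B) = f A + f B) &
      (forall A B, f (sandwich_mul P A B) = sandwich_mul Q (f A) (f B))].

Definition sandwich_rings_isomorphic (R : pzRingType) (m n : nat)
  (P Q : 'M[R]_(n, m)) : Prop :=
  exists f, sandwich_ring_iso P Q f.

Definition sandwich_algebras_isomorphic (R : fieldType) (m n : nat)
  (P Q : 'M[R]_(n, m)) : Prop :=
  exists f, sandwich_ring_iso P Q f /\ (forall (a : R) A, f (a *: A) = a *: f A).

From mathcomp Require Import all_boot all_algebra.
Set Implicit Arguments. Unset Strict Implicit. Unset Printing Implicit Defensive.
Import GRing.Theory.
Local Open Scope ring_scope.

(* With V' and W' the inverses of V and W, A |-> W' A V' carries A P B to
   (W' A V') (V P W) (W' B V'), since the inner factors V' V and W W' cancel;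
   its inverse is A |-> W A V. *)

Definition mx_sandwich_conj (R : pzRingType) (m n : nat)
  (W' : 'M[R]_m) (V' : 'M[R]_n) (A : 'M[R]_(m, n)) : 'M[R]_(m, n) :=
  W' *m A *m V'.

Lemma mx_sandwich_conjK (R : pzRingType) (m n : nat)
  (V V' : 'M[R]_n) (W W' : 'M[R]_m) :
  V' *m V = 1%:M -> W *m W' = 1%:M ->
  cancel (mx_sandwich_conj W' V') (mx_sandwich_conj W V).
Proof.
move=> V'V WW' A.
by rewrite /mx_sandwich_conj !mulmxA WW' mul1mx -!mulmxA V'V mulmx1.
Qed.

Section SandwichConj.

Variables (R : pzRingType) (m n : nat).
Variables (V V' : 'M[R]_n) (W W' : 'M[R]_m).

Lemma mx_sandwich_conjD (A B : 'M[R]_(m, n)) :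
  mx_sandwich_conj W' V' (A + B) =
  mx_sandwich_conj W' V' A + mx_sandwich_conj W' V' B.
Proof. by rewrite /mx_sandwich_conj mulmxDr mulmxDl. Qed.

Lemma mx_sandwich_conj_mul (P : 'M[R]_(n, m)) (A B : 'M[R]_(m, n)) :
  V' *m V = 1%:M -> W *m W' = 1%:M ->
  mx_sandwich_conj W' V' (sandwich_mul P A B) =
  sandwich_mul (V *m P *m W) (mx_sandwich_conj W' V' A)
                             (mx_sandwich_conj W' V' B).
Proof.
move=> V'V WW'; rewrite /sandwich_mul /mx_sandwich_conj !mulmxA.
by rewrite -[W' *m A *m V' *m V]mulmxA V'V mulmx1
           -[W' *m A *m P *m W *m W']mulmxA WW' mulmx1.
Qed.

Lemma mx_sandwich_conj_iso (P : 'M[R]_(n, m)) :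
  V *m V' = 1%:M -> V' *m V = 1%:M -> W *m W' = 1%:M -> W' *m W = 1%:M ->
  sandwich_ring_iso P (V *m P *m W) (mx_sandwich_conj W' V').
Proof.
move=> VV' V'V WW' W'W; split.
- by exists (mx_sandwich_conj W V); exact: mx_sandwich_conjK.
- exact: mx_sandwich_conjD.
- by move=> A B; exact: mx_sandwich_conj_mul.
Qed.

End SandwichConj.

Lemma mx_sandwich_conjZ (R : comNzRingType) (m n : nat)
  (W' : 'M[R]_m) (V' : 'M[R]_n) (a : R) (A : 'M[R]_(m, n)) :
  mx_sandwich_conj W' V' (a *: A) = a *: mx_sandwich_conj W' V' A.
Proof. by rewrite /mx_sandwich_conj -scalemxAr -scalemxAl. Qed.

Lemma sandwich_rings_isomorphic_equiv (R : pzRingType) (m n : nat)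
  (P : 'M[R]_(n, m)) (V : 'M[R]_n) (W : 'M[R]_m) :
  invertible_mx V -> invertible_mx W ->
  sandwich_rings_isomorphic P (V *m P *m W).
Proof.
move=> [V' [VV' V'V]] [W' [WW' W'W]].
by exists (mx_sandwich_conj W' V'); exact: mx_sandwich_conj_iso.
Qed.

Lemma sandwich_algebras_isomorphic_equiv (F : fieldType) (m n : nat)
  (P : 'M[F]_(n, m)) (V : 'M[F]_n) (W : 'M[F]_m) :
  invertible_mx V -> invertible_mx W ->
  sandwich_algebras_isomorphic P (V *m P *m W).
Proof.
move=> [V' [VV' V'V]] [W' [WW' W'W]].
exists (mx_sandwich_conj W' V'); split; first exact: mx_sandwich_conj_iso.
exact: mx_sandwich_conjZ.
Qed.

Theorem lemma1p4 :
  (forall (D : unitRingType) (m n : nat), is_division_ring D ->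
     (0 < m)%N -> (0 < n)%N ->
     forall (P : 'M[D]_(n, m)) (V : 'M[D]_n) (W : 'M[D]_m),
       invertible_mx V -> invertible_mx W ->
       sandwich_rings_isomorphic P (V *m P *m W)) /\
  (forall (F : fieldType) (m n : nat),
     (0 < m)%N -> (0 < n)%N ->
     forall (P : 'M[F]_(n, m)) (V : 'M[F]_n) (W : 'M[F]_m),
       invertible_mx V -> invertible_mx W ->
       sandwich_algebras_isomorphic P (V *m P *m W)).
Proof.
split=> [D m n _ _ _ | F m n _ _] P V W.
- exact: sandwich_rings_isomorphic_equiv.
- exact: sandwich_algebras_isomorphic_equiv.
Qed.
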